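(* For every integer $n\ge 1$, $$\Phi^{(2)}[a; bq^n, b'; c, c'; x, y] = \Phi^{(2)}[a; b, b'; c, c'; x, y] + \frac{bx(1-a)}{1-c} \sum_{k=1}^n q^{k-1} \Phi^{(2)}[aq; bq^k, b'; cq, c'; x, y]$$ and $$\Phi^{(2)}[a; bq^{-n}, b'; c, c'; x, y] = \Phi^{(2)}[a; b, b'; c, c'; x, y] - \frac{bx(1-a)}{1-c} \sum_{k=1}^n q^{-k} \Phi^{(2)}[aq; bq^{1-k}, b'; cq, c'; x, y].$$
   Context: Let $q$ be a complex number with $0<|q|<1$. For complex $z$ and integer $m\ge 0$, $(z;q)_m=\prod_{j=0}^{m-1}(1-zq^j)$, with $(z;q)_0=1$. The $q$-Appell function $\Phi^{(2)}$ is $$\Phi^{(2)}[a; b, b'; c, c'; x, y] = \sum_{m, n \geq 0} \frac{(a; q)_{m+n} (b; q)_m (b'; q)_n}{(q; q)_m (q; q)_n (c; q)_m (c'; q)_n} x^m y^n.$$ Identities are understood as identities of power series in $x,y$ (formal, or convergent for small $|x|,|y|$), with complex parameters chosen so that no denominator occurring vanishes. *)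

(* Complex numbers: R[i] = complex R over a real closed field R
   (mathcomp-real-closed); for R a realType this is the usual field C. *)
From mathcomp Require Import all_boot all_order all_algebra.
From mathcomp Require Export complex.
Set Implicit Arguments. Unset Strict Implicit. Unset Printing Implicit Defensive.
Import Order.TTheory GRing.Theory Num.Theory.
Local Open Scope ring_scope.

Definition qpoch (C : ringType) (q z : C) (m : nat) : C :=
  \prod_(j < m) (1 - z * q ^+ j).

(* A formal power series in x, y is given by its coefficient array:
   F m n = coefficient of x^m y^n. *)
Definition fps2 (C : Type) := nat -> nat -> C.

Definition Phi2 (C : fieldType) (q a b b' c c' : C) : fps2 C :=
  fun m n => qpoch q a (m + n) * qpoch q b m * qpoch q b' n
             / (qpoch q q m * qpoch q q n * qpoch q c m * qpoch q c' n).

Definition mulX (C : ringType) (F : fps2 C) : fps2 C :=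
  fun m n => if m is m'.+1 then F m' n else 0.

(** The only input is the contiguous relation for [b -> b q]: since
    [(bq;q)_(m+1) - (b;q)_(m+1) = b (1 - q^(m+1)) (bq;q)_m], the difference
    [Phi2[..; bq, ..] - Phi2[..; b, ..]] is [x] times a [Phi2] with [a], [c]
    multiplied by [q].  Iterating it [n] times telescopes to the first identity;
    the second is the first one at [b q^-n], read backwards. *)
From mathcomp Require Import all_boot all_order all_algebra.
From mathcomp Require Import complex.
From mathcomp Require Import ring zify.
Set Implicit Arguments. Unset Strict Implicit. Unset Printing Implicit Defensive.
Import Order.TTheory GRing.Theory Num.Theory.
Local Open Scope ring_scope.

Lemma qpochSl (C : nzRingType) (q z : C) m :
  qpoch q z m.+1 = (1 - z) * qpoch q (z * q) m.
Proof.
rewrite /qpoch big_ord_recl expr0 mulr1; congr (_ * _).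
by apply: eq_bigr => i _; rewrite /bump /= exprS mulrA.
Qed.

Lemma qpochSr (C : nzRingType) (q z : C) m :
  qpoch q z m.+1 = qpoch q z m * (1 - z * q ^+ m).
Proof. by rewrite /qpoch big_ord_recr. Qed.

Lemma qpoch_qq_neq0 (C : numDomainType) (q : C) m :
  `|q| < 1 -> qpoch q q m != 0.
Proof.
move=> q_lt1; apply/prodf_neq0 => j _; rewrite subr_eq0 -exprS eq_sym.
apply: contraTneq q_lt1 => /(congr1 Num.norm); rewrite normrX normr1.
by move/eqP; rewrite pexpr_eq1 ?normr_ge0 // => /eqP ->; rewrite ltxx.
Qed.

Lemma mulX0 (C : nzRingType) (F : fps2 C) j : mulX F 0 j = 0.
Proof. by []. Qed.

Lemma mulXS (C : nzRingType) (F : fps2 C) i j : mulX F i.+1 j = F i j.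
Proof. by []. Qed.

Lemma sum_expq_rev (C : fieldType) (q b : C) (F : C -> C) n : q != 0 ->
  q ^- n * \sum_(1 <= k < n.+1) q ^+ (k - 1) * F (b * q ^- n * q ^+ k) =
  \sum_(1 <= k < n.+1) q ^- k * F (b * q ^- (k - 1)).
Proof.
move=> q_neq0; rewrite mulr_sumr big_nat_rev /=.
apply: eq_big_nat => k /andP[k_ge1 k_le_n].
have [d ->] : exists d, n = (k + d)%N by exists (n - k)%N; rewrite subnKC.
case: k k_ge1 {k_le_n} => // k _.
have -> : (1 + (k.+1 + d).+1 - k.+2 = d.+1)%N by lia.
have qk_neq0 : q ^+ k != 0 by rewrite expf_neq0.
have qd_neq0 : q ^+ d != 0 by rewrite expf_neq0.
have -> : b * q ^- (k.+1 + d) * q ^+ d.+1 = b * q ^- k.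
  by rewrite exprD !exprS; field; rewrite q_neq0 qk_neq0 qd_neq0.
by rewrite !subn1 exprD invfM mulrA mulfVK.
Qed.

Section BShift.

Variables (C : fieldType) (q a b' c c' : C).
Hypotheses (qq_neq0 : forall m, qpoch q q m != 0)
           (c_neq0 : forall m, qpoch q c m != 0)
           (c'_neq0 : forall m, qpoch q c' m != 0).

Lemma Phi2_mulq_b b i j :
  Phi2 q a (b * q) b' c c' i j = Phi2 q a b b' c c' i j
  + (b * (1 - a) / (1 - c)) * mulX (Phi2 q (a * q) (b * q) b' (c * q) c') i j.
Proof.
case: i => [|m]; first by rewrite mulX0 mulr0 addr0 /Phi2 /qpoch !big_ord0.
have := c_neq0 m.+1; rewrite qpochSl mulf_eq0 negb_or => /andP[c_neq1 cq_neq0].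
have := qq_neq0 m.+1; rewrite qpochSr mulf_eq0 negb_or => /andP[qm_neq0 qSm_neq1].
have qj_neq0 := qq_neq0 j; have c'j_neq0 := c'_neq0 j.
rewrite mulXS /Phi2 addSn (qpochSl q a) (qpochSl q b m) (qpochSl q c m).
rewrite (qpochSr q (b * q) m) (qpochSr q q m) -[b * q * _]mulrA.
move: qSm_neq1; set qSm := q * q ^+ m => qSm_neq1.
by field; rewrite qm_neq0 qSm_neq1 qj_neq0 c_neq1 cq_neq0 c'j_neq0.
Qed.

Lemma Phi2_expq_b n b i j :
  Phi2 q a (b * q ^+ n) b' c c' i j =
  Phi2 q a b b' c c' i j
  + (b * (1 - a) / (1 - c)) *
    mulX (fun i' j' => \sum_(1 <= k < n.+1)
            q ^+ (k - 1) * Phi2 q (a * q) (b * q ^+ k) b' (c * q) c' i' j') i j.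
Proof.
elim: n => [|n IH].
  by case: i => [|i]; rewrite expr0 mulr1 ?mulXS ?big_geq // mulr0 addr0.
rewrite exprSr mulrA Phi2_mulq_b IH -[b * _ * q]mulrA -exprSr -addrA.
case: i {IH} => [|i]; first by rewrite !mulX0 !mulr0 !addr0.
by rewrite !mulXS [in RHS]big_nat_recr //= subSS subn0; congr (_ + _); ring.
Qed.

Hypothesis q_neq0 : q != 0.

Lemma Phi2_expVq_b n b i j :
  Phi2 q a (b * q ^- n) b' c c' i j =
  Phi2 q a b b' c c' i j
  - (b * (1 - a) / (1 - c)) *
    mulX (fun i' j' => \sum_(1 <= k < n.+1)
            q ^- k * Phi2 q (a * q) (b * q ^- (k - 1)) b' (c * q) c' i' j') i j.
Proof.
have qn_neq0 : q ^+ n != 0 by rewrite expf_neq0.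
have := Phi2_expq_b n (b * q ^- n) i j; rewrite divfK // => ->.
rewrite -addrA -[LHS]addr0; congr (_ + _); apply/esym/eqP; rewrite subr_eq0.
apply/eqP; case: i => [|i]; first by rewrite !mulX0 !mulr0.
have c_unit : 1 - c != 0 by have := c_neq0 1; rewrite /qpoch big_ord1 expr0 mulr1.
pose F z := Phi2 q (a * q) z b' (c * q) c' i j.
rewrite !mulXS -(sum_expq_rev b F n q_neq0) /F /=.
by field; rewrite qn_neq0 c_unit.
Qed.

End BShift.

Theorem theorem8 (R : rcfType) (q a b b' c c' : R[i])
  (hq0 : 0 < `|q|) (hq1 : `|q| < 1)
  (hc : forall m : nat, qpoch q c m != 0)
  (hc' : forall m : nat, qpoch q c' m != 0)
  (n : nat) (hn : (1 <= n)%N) :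
  (forall i j : nat,
     Phi2 q a (b * q ^+ n) b' c c' i j =
     Phi2 q a b b' c c' i j
     + (b * (1 - a) / (1 - c)) *
       mulX (fun i' j' => \sum_(1 <= k < n.+1)
               q ^+ (k - 1) * Phi2 q (a * q) (b * q ^+ k) b' (c * q) c' i' j') i j)
  /\
  (forall i j : nat,
     Phi2 q a (b * q ^- n) b' c c' i j =
     Phi2 q a b b' c c' i j
     - (b * (1 - a) / (1 - c)) *
       mulX (fun i' j' => \sum_(1 <= k < n.+1)
               q ^- k * Phi2 q (a * q) (b * q ^- (k - 1)) b' (c * q) c' i' j') i j).
Proof.
have qq_neq0 m : qpoch q q m != 0 by exact: qpoch_qq_neq0.
have q_neq0 : q != 0 by rewrite -normr_gt0.
split=> i j; first exact: Phi2_expq_b.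
exact: Phi2_expVq_b.
Qed.
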